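(* Let $T:X\to X$ be a continuous map on a Hausdorff space and $\mathcal{F}$ a Furstenberg family. If $x$ is an $\mathcal{F}$-recurrent point of $T$, then $\mathcal{N}_{pr}(\mathcal{C}_T(x))=\mathcal{N}_{pr}(\{x\})$, and $\mathcal{C}_T(x)^N\subset\mathcal{F}\mathrm{Rec}(T_{(N)})$ for every $N\in\mathbb{N}$. If moreover $X$ is a topological vector space and $T$ is linear, then $\mathcal{C}_T(x)$ is a vector subspace of $X$ invariant under every $S\in\mathcal{C}_T$.
   Context: A Furstenberg family is a collection $\mathcal{F}$ of infinite subsets of $\mathbb{N}_0$, closed under supersets, with $A\cap[n,\infty)\in\mathcal{F}$ for all $A\in\mathcal{F}$, $n\in\mathbb{N}$. $N_T(x,U)=\{n\in\mathbb{N}_0:T^nx\in U\}$; $x$ is $\mathcal{F}$-recurrent if $N_T(x,U)\in\mathcal{F}$ for every neighbourhood $U$ of $x$; $\mathcal{F}\mathrm{Rec}(T)$ is the set of $\mathcal{F}$-recurrent points. $T_{(N)}(x_1,\dots,x_N)=(Tx_1,\dots,Tx_N)$ on $X^N$. The (non-linear) commutant is $\mathcal{C}_T=\{S:X\to X \text{ continuous}: S\circ T=T\circ S\}$, and $\mathcal{C}_T(x)=\{Sx:S\in\mathcal{C}_T\}$. For $Y\subset X$, $\mathcal{N}_{pr}(Y)=\{A\subset\mathbb{N}_0: N_T(y,U)\subset A \text{ for some } y\in Y \text{ and some neighbourhood } U \text{ of } y\}$. *)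

From HB Require Import structures.
From mathcomp Require Import all_boot all_order all_algebra.
From mathcomp Require Import all_classical all_reals all_analysis.
Set Implicit Arguments. Unset Strict Implicit. Unset Printing Implicit Defensive.
Import Order.TTheory GRing.Theory Num.Theory.
Local Open Scope classical_set_scope.
Local Open Scope ring_scope.

Definition furstenberg_family (F : set (set nat)) : Prop :=
  [/\ (forall A, F A -> infinite_set A),
      (forall A B, F A -> A `<=` B -> F B) &
      (forall A (n : nat), F A -> (0 < n)%N -> F (A `&` [set k | (n <= k)%N]))].

Definition N_T {X : Type} (T : X -> X) (x : X) (U : set X) : set nat :=
  [set n | U (iter n T x)].

Definition F_recurrent {X : topologicalType} (T : X -> X) (F : set (set nat))
  (x : X) : Prop :=
  forall U, nbhs x U -> F (N_T T x U).

Definition FRec {X : topologicalType} (T : X -> X) (F : set (set nat)) : set X :=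
  [set x | F_recurrent T F x].

Definition T_N {X : topologicalType} (N : nat) (T : X -> X) :
  {ptws 'I_N -> X} -> {ptws 'I_N -> X} :=
  fun v i => T (v i).

Definition commutant {X : topologicalType} (T : X -> X) : set (X -> X) :=
  [set S | continuous S /\ S \o T = T \o S].

Definition commutant_orbit {X : topologicalType} (T : X -> X) (x : X) : set X :=
  [set S x | S in commutant T].

Definition set_pow {X : Type} (N : nat) (Y : set X) : set ('I_N -> X) :=
  [set v | forall i, Y (v i)].

Definition N_pr {X : topologicalType} (T : X -> X) (Y : set X) : set (set nat) :=
  [set A | exists y, Y y /\ exists U, nbhs y U /\ N_T T y U `<=` A].

Definition vsubspace {K : numDomainType} {V : lmodType K} (A : set V) : Prop :=
  A 0 /\ (forall (a : K) u v, A u -> A v -> A (a *: u + v)).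
Arguments set_pow {X} N Y.
Arguments T_N {X} N T.

From HB Require Import structures.
From mathcomp Require Import all_boot all_order all_algebra.
From mathcomp Require Import all_classical all_reals all_analysis.
Import Order.TTheory GRing.Theory Num.Theory.
Local Open Scope classical_set_scope.
Local Open Scope ring_scope.

(** Every [S] in the commutant semiconjugates [T] to itself, so
    [N_T(S x, U) = N_T(x, S^-1 U)]: return-time sets of [S x] are return-time
    sets of [x], and, [S] being continuous, [F]-recurrence passes from [x] to
    [S x].  For [N]-tuples apply the same argument to [z |-> (S_1 z, ..., S_N z)],
    which semiconjugates [T] to [T_(N)].  For linear [T] the commutant contains
    [0] and is closed under linear combinations; it is always closed under
    composition.  None of this uses the Hausdorff property, the continuity of
    [T] or the axioms of a Furstenberg family. *)

Section Semiconjugacy.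
Context {X Y : Type} {T : X -> X} {T' : Y -> Y} {phi : X -> Y}.
Hypothesis semiconj : phi \o T = T' \o phi.

Lemma iter_semiconj n z : phi (iter n T z) = iter n T' (phi z).
Proof.
elim: n => //= n <-.
exact: (congr1 (fun f => f (iter n T z)) semiconj).
Qed.

Lemma N_T_semiconj z U : N_T T' (phi z) U = N_T T z (phi @^-1` U).
Proof. by apply/seteqP; split => n; rewrite /N_T /= iter_semiconj. Qed.

End Semiconjugacy.

Lemma F_recurrent_semiconj {X Y : topologicalType} (T : X -> X) (T' : Y -> Y)
    (phi : X -> Y) (F : set (set nat)) (x : X) :
  continuous phi -> phi \o T = T' \o phi ->
  F_recurrent T F x -> F_recurrent T' F (phi x).
Proof.
move=> cphi semiconj rx U /cphi Ux.
by rewrite (N_T_semiconj semiconj); exact: rx.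
Qed.

Lemma continuous_ptws {X Y : topologicalType} {I : Type} (S : I -> X -> Y) :
  (forall i, continuous (S i)) ->
  continuous ((fun z i => S i z) : X -> {ptws I -> Y}).
Proof.
move=> cS x; apply/cvg_sup => i.
move: x; apply/(@continuousP _ (initial_topology (@^~ i))) => _ [B oB <-].
exact: (proj1 (continuousP (S i)) (cS i) B oB).
Qed.

Section Commutant.
Context {X : topologicalType} (T : X -> X).

Lemma commutant_id : commutant T id.
Proof. by split => // z; exact: cvg_id. Qed.

Lemma commutant_comp S R : commutant T S -> commutant T R -> commutant T (S \o R).
Proof.
move=> [cS ST] [cR RT]; split.
  by move=> z; exact: continuous_comp (cR z) (cS (R z)).
by rewrite -compA RT compA ST.
Qed.

Lemma commutant_cst c : T c = c -> commutant T (cst c).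
Proof.
move=> Tc; split; first exact: cst_continuous.
by apply: funext => z /=; rewrite Tc.
Qed.

Lemma commutant_orbit_self x : commutant_orbit T x x.
Proof. by exists id => //; exact: commutant_id. Qed.

Lemma commutant_orbit_invariant S x :
  commutant T S -> S @` commutant_orbit T x `<=` commutant_orbit T x.
Proof.
by move=> cS _ [_ [R cR <-] <-]; exists (S \o R) => //; exact: commutant_comp.
Qed.

Lemma N_pr_commutant_orbit x : N_pr T (commutant_orbit T x) = N_pr T [set x].
Proof.
apply/seteqP; split => A [y [xy [U [Uy UA]]]]; last first.
  by exists y; split; [rewrite xy; exact: commutant_orbit_self | exists U].
case: xy => S [cS ST] Sx; subst y.
exists x; split => //; exists (S @^-1` U); split; first exact: cS.
by rewrite -(N_T_semiconj ST).
Qed.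

Lemma set_pow_commutant_orbit_FRec (F : set (set nat)) x N :
  F_recurrent T F x -> set_pow N (commutant_orbit T x) `<=` FRec (T_N N T) F.
Proof.
move=> rx v orbit_v.
have /choice[S S_spec] : forall i, exists S, commutant T S /\ S x = v i.
  by move=> i; have [S ? ?] := orbit_v i; exists S.
pose phi := (fun z i => S i z) : X -> {ptws 'I_N -> X}.
have -> : v = phi x by apply: funext => i; case: (S_spec i).
apply: F_recurrent_semiconj rx.
  by apply: continuous_ptws => i; case: (S_spec i) => -[].
apply: funext => z; apply: funext => i.
by case: (S_spec i) => -[_ /(congr1 (@^~ z))].
Qed.

End Commutant.

Lemma continuous_add {Y : topologicalType} {M : topologicalZmodType}
    {f g : Y -> M} :
  continuous f -> continuous g -> continuous (f \+ g).
Proof.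
move=> cf cg z.
exact: (continuous2_cvg _ (add_continuous (f z, g z)) (cf z) (cg z)).
Qed.

Lemma continuous_scale {Y : topologicalType} {K : numDomainType}
    {M : topologicalLmodType K} (a : K) {f : Y -> M} :
  continuous f -> continuous (fun z => a *: f z).
Proof.
move=> cf z; apply: (@continuous2_cvg _ K^o M M _ _ (fun _ => a) f).
- exact: (scale_continuous ((a : K^o), f z)).
- exact: cvg_cst.
- exact: cf.
Qed.

Section LinearCommutant.
Context {K : numFieldType} {X : topologicalLmodType K} (T : X -> X).
Hypothesis linT : linear T.

Lemma linear_fun0 : T 0 = 0.
Proof.
have := linT (-1) 0 0.
by rewrite scaleN1r oppr0 !addr0 => ->; rewrite scaleN1r addNr.
Qed.

Lemma commutant_lin_comb (a : K) S R :
  commutant T S -> commutant T R -> commutant T (fun z => a *: S z + R z).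
Proof.
move=> [cS ST] [cR RT]; split.
  exact: continuous_add (continuous_scale a cS) cR.
apply: funext => z /=; rewrite linT.
by move: (congr1 (@^~ z) ST) (congr1 (@^~ z) RT) => /= -> ->.
Qed.

Lemma vsubspace_commutant_orbit x : vsubspace (commutant_orbit T x).
Proof.
split; first by exists (cst 0) => //; exact/commutant_cst/linear_fun0.
move=> a _ _ [S cS <-] [R cR <-].
by exists (fun z => a *: S z + R z) => //; exact: commutant_lin_comb.
Qed.

End LinearCommutant.

Theorem mainTheorem14 :
  (forall (X : topologicalType) (T : X -> X) (F : set (set nat)) (x : X),
     hausdorff_space X -> continuous T -> furstenberg_family F ->
     F_recurrent T F x ->
     N_pr T (commutant_orbit T x) = N_pr T [set x] /\
     (forall N : nat, (0 < N)%N ->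
        set_pow N (commutant_orbit T x) `<=` FRec (T_N N T) F)) /\
  (forall (K : numFieldType) (X : topologicalLmodType K) (T : X -> X)
          (F : set (set nat)) (x : X),
     hausdorff_space X -> continuous T -> linear T -> furstenberg_family F ->
     F_recurrent T F x ->
     vsubspace (commutant_orbit T x) /\
     (forall S, commutant T S -> S @` commutant_orbit T x `<=` commutant_orbit T x)).
Proof.
split=> [X T F x _ _ _ rx | K X T F x _ _ linT _ _].
  split; first exact: N_pr_commutant_orbit.
  by move=> N _; exact: set_pow_commutant_orbit_FRec.
split; first exact: vsubspace_commutant_orbit.
by move=> S; exact: commutant_orbit_invariant.
Qed.
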